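(* Let $(G,\theta_G,(-1)^F_G)$ and $(H,\theta_H,(-1)^F_H)$ be fermionic groups. Equip the space $G\otimes H:=(G\times H)/\langle((-1)^F_G,(-1)^F_H)\rangle$, with elements written $g\otimes h$, with the following data: \begin{itemize} \item the product $(g_1\otimes h_1)(g_2\otimes h_2)=((-1)^F_G)^{\theta_G(g_2)\theta_H(h_1)}\,g_1g_2\otimes h_1h_2$; \item the element $1\otimes(-1)^F_H=(-1)^F_G\otimes 1$; \item the map $\theta(g\otimes h)=\theta_G(g)+\theta_H(h)$. \end{itemize} Then the product is well defined, and with these data $G\otimes H$ is a fermionic group.
   Context: A fermionic group is a topological group $G$ together with a central element $(-1)^F\in G$ with $((-1)^F)^2=1$ and a continuous homomorphism $\theta:G\to\mathbb{Z}_2=\{0,1\}$, written additively, satisfying $\theta((-1)^F)=0$. *)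

From HB Require Import structures.
From mathcomp Require Import all_boot all_order all_algebra.
From mathcomp Require Import all_classical all_reals all_analysis.
From mathcomp Require Import generic_quotient.

Set Implicit Arguments.
Unset Strict Implicit.
Unset Printing Implicit Defensive.

Local Open Scope classical_set_scope.

(* Z_2 = {0,1} written additively is modelled by bool with addition addb
   (xor), 0 = false, 1 = true; bool carries the discrete topology. *)

Record is_topological_group (T : topologicalType)
  (mul : T -> T -> T) (one : T) (inv : T -> T) : Prop := {
  tg_mulA : forall x y z, mul x (mul y z) = mul (mul x y) z;
  tg_mul1g : forall x, mul one x = x;
  tg_mulg1 : forall x, mul x one = x;
  tg_mulVg : forall x, mul (inv x) x = one;
  tg_mulgV : forall x, mul x (inv x) = one;
  tg_mul_cont : continuous (fun p : T * T => mul p.1 p.2);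
  tg_inv_cont : continuous inv
}.

Record is_fermionic_group (T : topologicalType)
  (mul : T -> T -> T) (one : T) (inv : T -> T)
  (fer : T) (theta : T -> bool) : Prop := {
  fg_top : is_topological_group mul one inv;
  fg_fer_central : forall x, mul fer x = mul x fer;
  fg_fer_sq : mul fer fer = one;
  fg_theta_morph : forall x y, theta (mul x y) = addb (theta x) (theta y);
  fg_theta_cont : continuous theta;
  fg_theta_fer : theta fer = false
}.

(* The quotient of G x H by the subgroup generated by c = (ferG, ferH):
   p ~ q  iff  c^n p = c^m q for some n m.  (Under the fermionic group
   axioms this is exactly the coset relation of <c> = {1, c}; stated this
   way it is an equivalence relation without any hypothesis.) *)
Local Open Scope quotient_scope.
Section FermQuot.
Variables (G H : topologicalType) (mulG : G -> G -> G) (mulH : H -> H -> H)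
  (ferG : G) (ferH : H).

Definition cmul (p : G * H) : G * H := (mulG ferG p.1, mulH ferH p.2).

Definition ferm_rel (p q : G * H) : bool :=
  `[< exists n m : nat, iter n cmul p = iter m cmul q >].

Lemma ferm_rel_refl : reflexive ferm_rel.
Proof. by move=> p; apply/asboolP; exists 0%N, 0%N. Qed.

Lemma ferm_rel_sym : symmetric ferm_rel.
Proof.
move=> p q; apply/asboolP/asboolP => -[n [m e]]; by exists m, n.
Qed.

Lemma ferm_rel_trans : transitive ferm_rel.
Proof.
move=> q p r /asboolP [n [m e1]] /asboolP [k [l e2]]; apply/asboolP.
exists (n + k)%N, (m + l)%N.
by rewrite addnC iterD e1 -iterD addnC iterD e2 -iterD.
Qed.

Canonical ferm_equiv := EquivRel ferm_rel ferm_rel_refl ferm_rel_sym ferm_rel_trans.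

Definition ferm_tensor := quotient_topology {eq_quot ferm_equiv}.

Definition ferm_pi (g : G) (h : H) : ferm_tensor :=
  \pi_({eq_quot ferm_equiv}) (g, h).

End FermQuot.

From HB Require Import structures.
From mathcomp Require Import all_boot all_order all_algebra.
From mathcomp Require Import all_classical all_reals all_analysis.
From mathcomp Require Import generic_quotient.

Set Implicit Arguments.
Unset Strict Implicit.
Unset Printing Implicit Defensive.

(* With the twisted product of the statement, G × H is itself a fermionic
   group with (-1)^F = (1, (-1)^F_H), and c = ((-1)^F_G, (-1)^F_H) is a
   central even involution of it whose left translation generates the
   relation defining G ⊗ H.  The structure descends to the quotient by
   {1, c}, since translation by c commutes with the product, the inverse
   and θ.  The quotient map is open, so the product of two copies of it is
   again a quotient map, which makes the product on G ⊗ H continuous. *)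

Local Open Scope classical_set_scope.
Local Open Scope quotient_scope.

Lemma continuousT_comp (X Y Z : topologicalType) (f : Y -> Z) (g : X -> Y) :
  continuous f -> continuous g -> continuous (f \o g).
Proof. by move=> cf cg x; exact: continuous_comp (cg x) (cf (g x)). Qed.

Lemma fst_continuous (X Y : topologicalType) : continuous (@fst X Y).
Proof. by move=> x; exact: cvg_fst. Qed.

Lemma snd_continuous (X Y : topologicalType) : continuous (@snd X Y).
Proof. by move=> x; exact: cvg_snd. Qed.

Lemma continuous_pair (X Y Z : topologicalType) (f : X -> Y) (g : X -> Z) :
  continuous f -> continuous g -> continuous (fun x => (f x, g x)).
Proof. by move=> cf cg x; apply: cvg_pair; [exact: cf | exact: cg]. Qed.

(* A continuous map into the discrete space bool is locally constant. *)
Lemma continuous_bool_dep (X Y : topologicalType) (b : X -> bool)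
    (F : bool -> X -> Y) :
  continuous b -> (forall u, continuous (F u)) ->
  continuous (fun x => F (b x) x).
Proof.
move=> cb cF x.
have bx : \forall y \near x, b y = b x by exact: cb _ (discrete_set1 (b x)).
apply: cvg_trans (cF (b x) x); apply: near_eq_cvg.
by apply: filterS bx => y ->.
Qed.

Lemma continuous_bool2 (X Y : topologicalType) (op : bool -> bool -> Y)
    (b1 b2 : X -> bool) :
  continuous b1 -> continuous b2 -> continuous (fun x => op (b1 x) (b2 x)).
Proof.
move=> c1 c2; apply: (continuous_bool_dep (F := fun u x => op u (b2 x))) => // u.
apply: (continuous_bool_dep (F := fun v _ => op u v)) => // v.
exact: cst_continuous.
Qed.

Definition open_map (X Y : topologicalType) (p : X -> Y) :=
  forall U, open U -> open (p @` U).

Lemma open_map_pair (X1 X2 Y1 Y2 : topologicalType)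
    (p1 : X1 -> Y1) (p2 : X2 -> Y2) :
  open_map p1 -> open_map p2 -> open_map (fun x => (p1 x.1, p2 x.2)).
Proof.
move=> o1 o2 W; rewrite !openE => oW _ [[a b] Wab <-].
have [[A B] /= [Aa Bb] ABW] := oW _ Wab.
have image_nbhs (X Y : topologicalType) (p : X -> Y) (C : set X) x :
    open_map p -> nbhs x C -> nbhs (p x) (p @` C°).
  move=> op Cx; apply: open_nbhs_nbhs; split; first exact/op/open_interior.
  by exists x => //; exact: nbhs_singleton (nbhs_interior Cx).
exists (p1 @` A°, p2 @` B°).
  by split; [exact: image_nbhs o1 Aa | exact: image_nbhs o2 Bb].
move=> [y1 y2] [/= [x1 Ax1 <-] [x2 Bx2 <-]].
by exists (x1, x2) => //; apply: ABW; split; exact: interior_subset.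
Qed.

Lemma continuous_open_surj (X Y Z : topologicalType) (p : X -> Y) (F : Y -> Z) :
  open_map p -> (forall y, exists x, p x = y) ->
  continuous (F \o p) -> continuous F.
Proof.
move=> op sp /continuousP cFp; apply/continuousP => A oA.
have -> : F @^-1` A = p @` ((F \o p) @^-1` A).
  apply/seteqP; split => [y Ay|_ [x Ax <-] //].
  by have [x px] := sp y; exists x => //=; rewrite px.
exact/op/cFp.
Qed.

Section TopologicalGroup.
Variables (T : topologicalType) (mul : T -> T -> T) (one : T) (inv : T -> T).
Hypothesis tT : is_topological_group mul one inv.

Lemma mulg_inv_uniq x y : mul y x = one -> y = inv x.
Proof.
move=> yx1; rewrite -[y](tg_mulg1 tT) -(tg_mulgV tT x) (tg_mulA tT) yx1.
by rewrite (tg_mul1g tT).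
Qed.

Lemma continuous_mul (X : topologicalType) (u v : X -> T) :
  continuous u -> continuous v -> continuous (fun x => mul (u x) (v x)).
Proof.
move=> cu cv.
exact: continuousT_comp (tg_mul_cont tT) (continuous_pair cu cv).
Qed.

Lemma continuous_inv (X : topologicalType) (u : X -> T) :
  continuous u -> continuous (fun x => inv (u x)).
Proof. by move=> cu; exact: continuousT_comp (tg_inv_cont tT) cu. Qed.

End TopologicalGroup.

Section FermionicGroup.
Variables (T : topologicalType) (mul : T -> T -> T) (one : T) (inv : T -> T)
  (fer : T) (theta : T -> bool).
Hypothesis fT : is_fermionic_group mul one inv fer theta.

Let mulA := tg_mulA (fg_top fT).
Let mul1g := tg_mul1g (fg_top fT).
Let mulg1 := tg_mulg1 (fg_top fT).
Let thetaM := fg_theta_morph fT.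
Let ferC : forall x, mul fer x = mul x fer := fg_fer_central fT.

Definition fer_pow (b : bool) : T := if b then fer else one.

Lemma theta1 : theta one = false.
Proof. by move: (thetaM one one); rewrite mul1g; case: (theta one). Qed.

Lemma thetaV x : theta (inv x) = theta x.
Proof.
move: (thetaM (inv x) x); rewrite (tg_mulVg (fg_top fT)) theta1.
by case: (theta x); case: (theta (inv x)).
Qed.

Lemma fer_powC b x : mul (fer_pow b) x = mul x (fer_pow b).
Proof. by case: b => /=; [exact: ferC | rewrite mul1g mulg1]. Qed.

Lemma fer_powM a b x :
  mul (fer_pow a) (mul (fer_pow b) x) = mul (fer_pow (a (+) b)) x.
Proof.
by rewrite mulA; case: a; case: b => /=; rewrite ?(fg_fer_sq fT) ?mul1g ?mulg1.
Qed.

Lemma mul_fer_powCA b x y :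
  mul x (mul (fer_pow b) y) = mul (fer_pow b) (mul x y).
Proof. by rewrite mulA -fer_powC -mulA. Qed.

Lemma theta_fer_pow b x : theta (mul (fer_pow b) x) = theta x.
Proof. by case: b => /=; rewrite ?mul1g ?thetaM ?(fg_theta_fer fT). Qed.

Lemma continuous_fer_pow (X : topologicalType) (b : X -> bool) (u : X -> T) :
  continuous b -> continuous u -> continuous (fun x => mul (fer_pow (b x)) (u x)).
Proof.
move=> cb cu.
apply: (continuous_bool_dep (F := fun s x => mul (fer_pow s) (u x))) => // s.
exact: (continuous_mul (fg_top fT) (cst_continuous (x := fer_pow s)) cu).
Qed.

End FermionicGroup.

Section TwistedProduct.
Variables (G H : topologicalType)
  (mulG : G -> G -> G) (oneG : G) (invG : G -> G) (ferG : G) (thetaG : G -> bool)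
  (mulH : H -> H -> H) (oneH : H) (invH : H -> H) (ferH : H) (thetaH : H -> bool).
Hypotheses (fG : is_fermionic_group mulG oneG invG ferG thetaG)
           (fH : is_fermionic_group mulH oneH invH ferH thetaH).

Let tG := fg_top fG.
Let tH := fg_top fH.
Local Notation sG := (fer_pow oneG ferG).

Definition twisted_mul (p q : G * H) : G * H :=
  (mulG (sG (thetaG q.1 && thetaH p.2)) (mulG p.1 q.1), mulH p.2 q.2).

Definition twisted_inv (p : G * H) : G * H :=
  (mulG (sG (thetaG p.1 && thetaH p.2)) (invG p.1), invH p.2).

Definition twisted_theta (p : G * H) : bool := thetaG p.1 (+) thetaH p.2.

Lemma twisted_mulA p q r :
  twisted_mul p (twisted_mul q r) = twisted_mul (twisted_mul p q) r.
Proof.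
case: p q r => [g1 h1] [g2 h2] [g3 h3]; rewrite /twisted_mul /=.
congr (_, _); last exact: (tg_mulA tH).
rewrite (theta_fer_pow fG) !(fg_theta_morph fG) (fg_theta_morph fH).
rewrite (mul_fer_powCA fG) -(tg_mulA tG) !(fer_powM fG) (tg_mulA tG g1).
congr (mulG (sG _) _).
by case: (thetaG g2); case: (thetaG g3); case: (thetaH h1); case: (thetaH h2).
Qed.

Lemma twisted_mul1g p : twisted_mul (oneG, oneH) p = p.
Proof.
case: p => g h; rewrite /twisted_mul /= (theta1 fH) andbF /=.
by rewrite !(tg_mul1g tG) (tg_mul1g tH).
Qed.

Lemma twisted_mulg1 p : twisted_mul p (oneG, oneH) = p.
Proof.
case: p => g h; rewrite /twisted_mul /= (theta1 fG) /=.
by rewrite (tg_mul1g tG) (tg_mulg1 tG) (tg_mulg1 tH).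
Qed.

Lemma twisted_mulVg p : twisted_mul (twisted_inv p) p = (oneG, oneH).
Proof.
case: p => g h; rewrite /twisted_mul /twisted_inv /= (thetaV fH).
rewrite -(tg_mulA tG) (fer_powM fG) addbb /= (tg_mul1g tG).
by rewrite (tg_mulVg tG) (tg_mulVg tH).
Qed.

Lemma twisted_mulgV p : twisted_mul p (twisted_inv p) = (oneG, oneH).
Proof.
case: p => g h; rewrite /twisted_mul /twisted_inv /=.
rewrite (theta_fer_pow fG) (thetaV fG).
rewrite (mul_fer_powCA fG) (fer_powM fG) addbb /= (tg_mul1g tG).
by rewrite (tg_mulgV tG) (tg_mulgV tH).
Qed.

Lemma twisted_mul_continuous :
  continuous (fun x : (G * H) * (G * H) => twisted_mul x.1 x.2).
Proof.
have c11 : continuous (fun x : (G * H) * (G * H) => x.1.1).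
  exact: (continuousT_comp (@fst_continuous _ _) (@fst_continuous _ _)).
have c12 : continuous (fun x : (G * H) * (G * H) => x.1.2).
  exact: (continuousT_comp (@snd_continuous _ _) (@fst_continuous _ _)).
have c21 : continuous (fun x : (G * H) * (G * H) => x.2.1).
  exact: (continuousT_comp (@fst_continuous _ _) (@snd_continuous _ _)).
have c22 : continuous (fun x : (G * H) * (G * H) => x.2.2).
  exact: (continuousT_comp (@snd_continuous _ _) (@snd_continuous _ _)).
apply: continuous_pair; last exact: (continuous_mul tH c12 c22).
apply: (continuous_fer_pow fG); last exact: (continuous_mul tG c11 c21).
apply: (continuous_bool2 (op := andb)).
  exact: (continuousT_comp (fg_theta_cont fG) c21).
exact: (continuousT_comp (fg_theta_cont fH) c12).
Qed.

Lemma twisted_inv_continuous : continuous twisted_inv.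
Proof.
have thetaG1 : continuous (fun x : G * H => thetaG x.1).
  exact: (continuousT_comp (fg_theta_cont fG) (@fst_continuous _ _)).
have thetaH2 : continuous (fun x : G * H => thetaH x.2).
  exact: (continuousT_comp (fg_theta_cont fH) (@snd_continuous _ _)).
apply: continuous_pair; last exact: (continuous_inv tH (@snd_continuous _ _)).
apply: (continuous_fer_pow fG); last exact: (continuous_inv tG (@fst_continuous _ _)).
exact: (continuous_bool2 (op := andb) thetaG1 thetaH2).
Qed.

Lemma twisted_theta_continuous : continuous twisted_theta.
Proof.
apply: (continuous_bool2 (op := addb)).
  exact: (continuousT_comp (fg_theta_cont fG) (@fst_continuous _ _)).
exact: (continuousT_comp (fg_theta_cont fH) (@snd_continuous _ _)).
Qed.

Lemma twisted_theta_mul p q :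
  twisted_theta (twisted_mul p q) = twisted_theta p (+) twisted_theta q.
Proof.
case: p q => [g1 h1] [g2 h2].
rewrite /twisted_theta /twisted_mul /= (theta_fer_pow fG).
rewrite (fg_theta_morph fG) (fg_theta_morph fH).
by case: (thetaG g1); case: (thetaG g2); case: (thetaH h1); case: (thetaH h2).
Qed.

Lemma twisted_fermionic_group :
  is_fermionic_group twisted_mul (oneG, oneH) twisted_inv (oneG, ferH) twisted_theta.
Proof.
split.
- split; [exact: twisted_mulA | exact: twisted_mul1g | exact: twisted_mulg1
         | exact: twisted_mulVg | exact: twisted_mulgV
         | exact: twisted_mul_continuous | exact: twisted_inv_continuous].
- move=> [g h]; rewrite /twisted_mul /= (fg_theta_fer fH) (theta1 fG) andbF /=.
  by rewrite !(tg_mul1g tG) (tg_mulg1 tG) (fg_fer_central fH).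
- by rewrite /twisted_mul /= (theta1 fG) /= !(tg_mul1g tG) (fg_fer_sq fH).
- exact: twisted_theta_mul.
- exact: twisted_theta_continuous.
- by rewrite /twisted_theta /= (theta1 fG) (fg_theta_fer fH).
Qed.

Lemma twisted_mul_fer_pair p :
  twisted_mul (ferG, ferH) p = cmul mulG mulH ferG ferH p.
Proof.
case: p => g h; rewrite /twisted_mul /cmul /= (fg_theta_fer fH) andbF /=.
by rewrite (tg_mul1g tG).
Qed.

Lemma twisted_mul_fer_pairC p :
  twisted_mul (ferG, ferH) p = twisted_mul p (ferG, ferH).
Proof.
case: p => g h.
rewrite /twisted_mul /= (fg_theta_fer fH) (fg_theta_fer fG) andbF /=.
by rewrite !(tg_mul1g tG) (fg_fer_central fG) (fg_fer_central fH).
Qed.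

Lemma twisted_mul_fer_pair_sq :
  twisted_mul (ferG, ferH) (ferG, ferH) = (oneG, oneH).
Proof.
rewrite /twisted_mul /= (fg_theta_fer fG) /= (tg_mul1g tG).
by rewrite (fg_fer_sq fG) (fg_fer_sq fH).
Qed.

Lemma twisted_theta_fer_pair : twisted_theta (ferG, ferH) = false.
Proof. by rewrite /twisted_theta /= (fg_theta_fer fG) (fg_theta_fer fH). Qed.

End TwistedProduct.

Section CentralQuotient.
Variables (T : topologicalType) (mul : T -> T -> T) (one : T) (inv : T -> T)
  (fer : T) (theta : T -> bool).
Hypothesis fT : is_fermionic_group mul one inv fer theta.
Variable c : T.
Hypotheses (mulcC : forall x, mul c x = mul x c) (mulcc : mul c c = one)
  (theta_c : theta c = false).
Variables (Q : topologicalType) (pi : T -> Q) (sec : Q -> T).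
Hypotheses (secK : cancel sec pi)
  (pi_eq : forall p q, pi p = pi q <-> q = p \/ q = mul c p)
  (pi_cont : continuous pi) (pi_open : open_map pi).

Let tT := fg_top fT.

Definition quot_mul (x y : Q) : Q := pi (mul (sec x) (sec y)).
Definition quot_inv (x : Q) : Q := pi (inv (sec x)).
Definition quot_theta (x : Q) : bool := theta (sec x).

Lemma pi_mulc p : pi (mul c p) = pi p.
Proof. by apply/esym/pi_eq; right. Qed.

Lemma sec_pi p : sec (pi p) = p \/ sec (pi p) = mul c p.
Proof. by apply/pi_eq; rewrite secK. Qed.

Lemma mulcCA p q : mul p (mul c q) = mul c (mul p q).
Proof. by rewrite (tg_mulA tT) -mulcC (tg_mulA tT). Qed.

Lemma inv_mulc p : inv (mul c p) = mul c (inv p).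
Proof.
apply/esym/(mulg_inv_uniq tT).
rewrite -(tg_mulA tT) mulcCA (tg_mulA tT) mulcc (tg_mul1g tT).
exact: (tg_mulVg tT).
Qed.

Lemma theta_mulc p : theta (mul c p) = theta p.
Proof. by rewrite (fg_theta_morph fT) theta_c. Qed.

Lemma quot_mul_pi p q : quot_mul (pi p) (pi q) = pi (mul p q).
Proof.
rewrite /quot_mul; case: (sec_pi p) => ->; case: (sec_pi q) => ->;
by rewrite -?(tg_mulA tT) ?mulcCA ?pi_mulc.
Qed.

Lemma quot_inv_pi p : quot_inv (pi p) = pi (inv p).
Proof.
by rewrite /quot_inv; case: (sec_pi p) => ->; rewrite ?inv_mulc ?pi_mulc.
Qed.

Lemma quot_theta_pi p : quot_theta (pi p) = theta p.
Proof. by rewrite /quot_theta; case: (sec_pi p) => ->; rewrite ?theta_mulc. Qed.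

Lemma pi_surj (y : Q) : exists p, pi p = y.
Proof. by exists (sec y). Qed.

Lemma continuous_quot (Z : topologicalType) (F : Q -> Z) :
  continuous (F \o pi) -> continuous F.
Proof. exact: continuous_open_surj pi_open pi_surj. Qed.

Lemma quot_mul_continuous :
  continuous (fun x : Q * Q => quot_mul x.1 x.2).
Proof.
apply: (continuous_open_surj (p := fun x : T * T => (pi x.1, pi x.2))).
- exact: open_map_pair.
- by move=> [y1 y2]; exists (sec y1, sec y2); rewrite /= !secK.
- have -> : (fun x : Q * Q => quot_mul x.1 x.2) \o (fun x => (pi x.1, pi x.2))
          = pi \o (fun x : T * T => mul x.1 x.2).
    by apply: funext => x /=; rewrite quot_mul_pi.
  exact: (continuousT_comp pi_cont (tg_mul_cont tT)).
Qed.

Lemma quot_fermionic_group :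
  is_fermionic_group quot_mul (pi one) quot_inv (pi fer) quot_theta.
Proof.
have quot_ind (P : Q -> Prop) : (forall p, P (pi p)) -> forall x, P x.
  by move=> Ppi x; rewrite -[x]secK.
split.
- split.
  + by move=> + + +; do 3!apply: (quot_ind) => ?; rewrite !quot_mul_pi (tg_mulA tT).
  + by apply: (quot_ind) => p; rewrite quot_mul_pi (tg_mul1g tT).
  + by apply: (quot_ind) => p; rewrite quot_mul_pi (tg_mulg1 tT).
  + by apply: (quot_ind) => p; rewrite quot_inv_pi quot_mul_pi (tg_mulVg tT).
  + by apply: (quot_ind) => p; rewrite quot_inv_pi quot_mul_pi (tg_mulgV tT).
  + exact: quot_mul_continuous.
  + apply: continuous_quot.
    have -> : quot_inv \o pi = pi \o inv.
      by apply: funext => p /=; rewrite quot_inv_pi.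
    exact: (continuousT_comp pi_cont (tg_inv_cont tT)).
- by apply: (quot_ind) => p; rewrite !quot_mul_pi (fg_fer_central fT).
- by rewrite quot_mul_pi (fg_fer_sq fT).
- move=> + +; do 2!apply: (quot_ind) => ?.
  by rewrite quot_mul_pi !quot_theta_pi (fg_theta_morph fT).
- apply: continuous_quot.
  have -> : quot_theta \o pi = theta.
    by apply: funext => p /=; rewrite quot_theta_pi.
  exact: (fg_theta_cont fT).
- by rewrite quot_theta_pi (fg_theta_fer fT).
Qed.

End CentralQuotient.

Section TensorQuotient.
Variables (G H : topologicalType)
  (mulG : G -> G -> G) (oneG : G) (invG : G -> G) (ferG : G)
  (mulH : H -> H -> H) (oneH : H) (invH : H -> H) (ferH : H).
Hypotheses (tG : is_topological_group mulG oneG invG)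
           (tH : is_topological_group mulH oneH invH)
           (ferG_sq : mulG ferG ferG = oneG) (ferH_sq : mulH ferH ferH = oneH).

Local Notation Q := (ferm_tensor mulG mulH ferG ferH).
Local Notation cmulGH := (cmul mulG mulH ferG ferH).

Definition tensor_pi (p : G * H) : Q := ferm_pi mulG mulH ferG ferH p.1 p.2.

Lemma tensor_piE p : tensor_pi p = \pi_Q p.
Proof. by rewrite /tensor_pi /ferm_pi -surjective_pairing. Qed.

Lemma cmulK : involutive cmulGH.
Proof.
move=> [g h]; rewrite /cmul /= (tg_mulA tG) (tg_mulA tH) ferG_sq ferH_sq.
by rewrite (tg_mul1g tG) (tg_mul1g tH).
Qed.

Lemma iter_cmul n p : iter n cmulGH p = if odd n then cmulGH p else p.
Proof. by elim: n => //= n ->; case: (odd n); rewrite //= cmulK. Qed.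

Lemma tensor_pi_eq p q : tensor_pi p = tensor_pi q <-> q = p \/ q = cmulGH p.
Proof.
rewrite !tensor_piE; split.
  move/eqmodP => /asboolP [n [m]]; rewrite !iter_cmul.
  case: (odd n); case: (odd m) => e.
  - by left; apply: (can_inj cmulK).
  - by right.
  - by right; rewrite e cmulK.
  - by left.
by case=> ->; apply/eqmodP/asboolP; [exists 0, 0 | exists 1, 0].
Qed.

Lemma tensor_reprK : cancel repr tensor_pi.
Proof. by move=> x; rewrite tensor_piE reprK. Qed.

Lemma tensor_pi_continuous : continuous tensor_pi.
Proof.
have -> : tensor_pi = \pi_Q by apply: funext => p; rewrite tensor_piE.
exact: pi_continuous.
Qed.

Lemma cmul_continuous : continuous cmulGH.
Proof.
apply: continuous_pair.
  exact: (continuous_mul tG (cst_continuous (x := ferG)) (@fst_continuous _ _)).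
exact: (continuous_mul tH (cst_continuous (x := ferH)) (@snd_continuous _ _)).
Qed.

(* The saturation of U is U together with its preimage under cmul. *)
Lemma tensor_pi_open : open_map tensor_pi.
Proof.
move=> U oU; rewrite /open /= /quotient_open.
have -> : \pi_Q @^-1` (tensor_pi @` U) = U `|` cmulGH @^-1` U.
  apply/seteqP; split => [y [x Ux]|y [Uy|Ucy]] /=; rewrite -tensor_piE.
  - by move/tensor_pi_eq => [->|->]; [left | right; rewrite /= cmulK].
  - by exists y.
  - by exists (cmulGH y) => //; apply/esym/tensor_pi_eq; right.
apply: openU => //; move/continuousP: cmul_continuous; exact.
Qed.

End TensorQuotient.

Theorem mainTheorem3 (G H : topologicalType)
  (mulG : G -> G -> G) (oneG : G) (invG : G -> G) (ferG : G) (thetaG : G -> bool)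
  (mulH : H -> H -> H) (oneH : H) (invH : H -> H) (ferH : H) (thetaH : H -> bool) :
  is_fermionic_group mulG oneG invG ferG thetaG ->
  is_fermionic_group mulH oneH invH ferH thetaH ->
  let Q := ferm_tensor mulG mulH ferG ferH in
  let pi := ferm_pi mulG mulH ferG ferH in
  pi oneG ferH = pi ferG oneH /\
  exists (mul : Q -> Q -> Q) (one : Q) (inv : Q -> Q) (theta : Q -> bool),
    (forall g1 h1 g2 h2,
        mul (pi g1 h1) (pi g2 h2) =
        pi (mulG (if thetaG g2 && thetaH h1 then ferG else oneG) (mulG g1 g2))
           (mulH h1 h2)) /\
    (forall g h, theta (pi g h) = addb (thetaG g) (thetaH h)) /\
    is_fermionic_group mul one inv (pi oneG ferH) theta.
Proof.
move=> fG fH Q pi.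
have tensor_eq :=
  tensor_pi_eq (fg_top fG) (fg_top fH) (fg_fer_sq fG) (fg_fer_sq fH).
have piE p q : tensor_pi mulG ferG mulH ferH p = tensor_pi mulG ferG mulH ferH q
    <-> q = p \/ q = twisted_mul mulG oneG ferG thetaG mulH thetaH (ferG, ferH) p.
  by rewrite (twisted_mul_fer_pair fG fH); exact: tensor_eq.
have fT := twisted_fermionic_group fG fH.
have mulcC := twisted_mul_fer_pairC fG fH.
have theta_c := twisted_theta_fer_pair fG fH.
have secK := @tensor_reprK _ _ mulG ferG mulH ferH.
have fQ := quot_fermionic_group fT mulcC (twisted_mul_fer_pair_sq fG fH) theta_c
  secK piE (@tensor_pi_continuous _ _ mulG ferG mulH ferH)
  (tensor_pi_open (fg_top fG) (fg_top fH) (fg_fer_sq fG) (fg_fer_sq fH)).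
split.
  apply/(tensor_eq (oneG, ferH) (ferG, oneH)); right.
  by rewrite /cmul /= (tg_mulg1 (fg_top fG)) (fg_fer_sq fH).
do 4!eexists; split; last split; last exact: fQ.
- by move=> g1 h1 g2 h2; exact: (quot_mul_pi fT mulcC secK piE (g1, h1) (g2, h2)).
- by move=> g h; exact: (quot_theta_pi fT theta_c secK piE (g, h)).
Qed.
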